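(* For every $n\geq 4$, the clique number of $\mathrm{KG}(\mathcal{T}_n)$ equals $\lfloor n/2\rfloor$. In particular $\chi(\mathrm{KG}(\mathcal{T}_n))\ge\lfloor n/2\rfloor$.
   Context: Label the vertices of a convex $n$-gon by $1,\dots,n$ in cyclic order; $\mathrm{Diag}_n = \{\{i,j\} \subseteq [n]: i-j\not\equiv \pm1 \pmod n\}$; a triangulation is identified with its set of $n-3$ diagonals, and $\mathcal{T}_n$ is the set of triangulations. $\mathrm{KG}(\mathcal{T}_n)$ is the graph on $\mathcal{T}_n$ in which two triangulations are adjacent iff they share no diagonal. *)

(* Vertices of the convex n-gon are labelled 0..n-1 (type 'I_n)
   in cyclic order, instead of 1..n. *)
From mathcomp Require Import all_boot all_order.
Set Implicit Arguments. Unset Strict Implicit. Unset Printing Implicit Defensive.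

Definition cyc_adj (n : nat) (i j : 'I_n) : bool :=
  ((i.+1 %% n) == j) || ((j.+1 %% n) == i).

Definition is_diag (n : nat) (d : {set 'I_n}) : bool :=
  [exists i : 'I_n, exists j : 'I_n,
     [&& i != j, d == [set i; j] & ~~ cyc_adj i j]].

(* Two diagonals cross (in their interiors) iff their endpoints strictly
   interleave in the cyclic order. *)
Definition crossing (n : nat) (d e : {set 'I_n}) : bool :=
  [exists a : 'I_n, exists b : 'I_n, exists c : 'I_n, exists f : 'I_n,
     [&& d == [set a; b], e == [set c; f] & (a < c < b) && (b < f)]].

(* A triangulation, identified with its set of diagonals: a set of n-3
   pairwise non-crossing diagonals. *)
Definition is_triangulation (n : nat) (T : {set {set 'I_n}}) : bool :=
  [&& [forall d in T, is_diag d],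
      [forall d in T, forall e in T, ~~ crossing d e]
    & #|T| == n - 3].

Definition KG_adj (n : nat) (T1 T2 : {set {set 'I_n}}) : bool :=
  [&& is_triangulation T1, is_triangulation T2 & [disjoint T1 & T2]].

Definition is_KG_clique (n : nat) (Q : {set {set {set 'I_n}}}) : bool :=
  [forall T in Q, is_triangulation T] &&
  [forall T1 in Q, forall T2 in Q, (T1 != T2) ==> KG_adj T1 T2].

Definition KG_clique_number (n : nat) : nat :=
  \max_(Q : {set {set {set 'I_n}}} | is_KG_clique Q) #|Q|.

Definition KG_proper_coloring (n k : nat) (c : {set {set 'I_n}} -> 'I_k) : Prop :=
  forall T1 T2 : {set {set 'I_n}}, KG_adj T1 T2 -> c T1 != c T2.

From mathcomp Require Import all_boot all_order zify.
Set Implicit Arguments. Unset Strict Implicit. Unset Printing Implicit Defensive.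

(* Upper bound: a vertex of the n-gon lies on at most n - 3 diagonals, so there
   are n(n-3)/2 diagonals, while each triangulation uses n - 3 of them and the
   members of a clique are pairwise disjoint.
   Lower bound: the zigzag triangulation started at s uses the diagonals
   {s - floor(l/2), s + ceil(l/2)} (mod n), 2 <= l <= n - 2.  The endpoints of
   each of them add up to 2s or 2s + 1 modulo n, which forces them not to cross,
   and makes the zigzags started at s = 0, ..., floor(n/2) - 1 pairwise
   disjoint. *)

Lemma eq_set2 (T : finType) (a b c d : T) :
  [set a; b] = [set c; d] -> (a = c /\ b = d) \/ (a = d /\ b = c).
Proof.
move=> E.
have := set21 a b; have := set22 a b; have := set21 c d; have := set22 c d.
rewrite -{1 2}E {3 4}E !inE.
by move=> /orP[]/eqP-> /orP[]/eqP-> /orP[]/eqP ? /orP[]/eqP ?; subst; auto.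
Qed.

Lemma eq_set2_sum m (a b c d : 'I_m) :
  [set a; b] = [set c; d] -> a + b = c + d.
Proof. by case/eq_set2 => -[-> ->] //; rewrite addnC. Qed.

Lemma cyc_adjC m (i j : 'I_m) : cyc_adj i j = cyc_adj j i.
Proof. by rewrite /cyc_adj orbC. Qed.

Lemma modnS_cases m N : m < N -> m.+1 %% N = m.+1 \/ m.+1 %% N = 0 /\ m.+1 = N.
Proof.
case: (ltngtP m.+1 N) => [lt|//|eq] _; first by left; exact: modn_small.
by right; rewrite eq modnn.
Qed.

Section DiagonalCount.

Variable N : nat.
Hypothesis N_ge3 : 3 <= N.

Lemma cyc_adj_ordS (i : 'I_N) : cyc_adj i (ordS i).
Proof. by rewrite /cyc_adj eqxx. Qed.

Lemma cyc_adj_ord_pred (i : 'I_N) : cyc_adj i (ord_pred i).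
Proof. by apply/orP; right; rewrite -[_ == _]/(ordS (ord_pred i) == i) ord_predK. Qed.

Lemma ordS_neq (i : 'I_N) : ordS i != i.
Proof.
by apply/eqP => /(congr1 val) /=; case: (modnS_cases (ltn_ord i)) => [|[]] ->; lia.
Qed.

Lemma ordS2_neq (i : 'I_N) : ordS (ordS i) != i.
Proof.
apply/eqP => /(congr1 val) /=; have := modnS_cases (ltn_ord i).
by case: (modnS_cases (ltn_ord (ordS i))) => [|[]] /= ->; lia.
Qed.

Lemma card_diags_through (i : 'I_N) (U : {set {set 'I_N}}) :
  {in U, forall d, is_diag d} -> #|[set d in U | i \in d]| <= N - 3.
Proof.
move=> U_diag.
pose far := [set j | (j != i) && ~~ cyc_adj i j].
have through_far : [set d in U | i \in d] \subset (fun j => [set i; j]) @: far.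
  apply/subsetP => d; rewrite inE => /andP[dU id].
  have /existsP[a /existsP[b /and3P[ab /eqP E nab]]] := U_diag d dU.
  move: id; rewrite E !inE => /orP[]/eqP ?; subst; apply/imsetP.
    by exists b; rewrite // inE eq_sym ab nab.
  by exists a; [rewrite inE ab cyc_adjC nab | rewrite setUC].
have near3 : #|[set i; ordS i; ord_pred i]| = 3.
  have i_pred : i != ord_pred i.
    by apply: contra (ordS_neq i) => /eqP {1}->; rewrite ord_predK.
  have S_pred : ordS i != ord_pred i.
    by apply: contra (ordS2_neq i) => /eqP ->; rewrite ord_predK.
  rewrite -setUA cardsU1 cards2 !inE eq_sym (negbTE (ordS_neq i)).
  by rewrite S_pred (negbTE i_pred).
have far_sub : far \subset ~: [set i; ordS i; ord_pred i].
  apply/subsetP => j; rewrite !inE => /andP[/negbTE-> nadj] /=.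
  by apply: contra nadj => /orP[]/eqP->; rewrite ?cyc_adj_ordS ?cyc_adj_ord_pred.
apply: leq_trans (subset_leq_card through_far) _.
apply: leq_trans (leq_imset_card _ _) _.
apply: leq_trans (subset_leq_card far_sub) _.
by have := cardsC [set i; ordS i; ord_pred i]; rewrite near3 card_ord; lia.
Qed.

Lemma card_diags_le (U : {set {set 'I_N}}) :
  {in U, forall d, is_diag d} -> 2 * #|U| <= N * (N - 3).
Proof.
move=> U_diag.
have sum_card : \sum_(d in U) #|d| = 2 * #|U|.
  rewrite -sum1_card big_distrr /=; apply: eq_bigr => d dU.
  have /existsP[a /existsP[b /and3P[ab /eqP -> _]]] := U_diag d dU.
  by rewrite cards2 ab.
have double_count : \sum_(d in U) #|d| = \sum_(i : 'I_N) #|[set d in U | i \in d]|.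
  under eq_bigr => d _ do rewrite -sum1_card big_mkcond /=.
  rewrite exchange_big /=; apply/eq_bigr => i _.
  rewrite -sum1_card [LHS]big_mkcond [RHS]big_mkcond /=; apply/eq_bigr => d _.
  by rewrite inE; case: (d \in U); case: (i \in d).
rewrite -sum_card double_count -[N in N * _]card_ord -sum_nat_const.
by apply: leq_sum => i _; exact: card_diags_through.
Qed.

End DiagonalCount.

Lemma KG_cliqueP N (Q : {set {set {set 'I_N}}}) :
  reflect ({in Q, forall T, is_triangulation T} /\
           {in Q &, forall T1 T2, T1 != T2 -> KG_adj T1 T2})
          (is_KG_clique Q).
Proof.
apply: (iffP andP) => -[Q_tri Q_adj]; split.
- exact/forall_inP.
- by move=> T1 T2 /(forall_inP Q_adj) /forall_inP /[apply] /implyP.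
- exact/forall_inP.
- apply/forall_inP => T1 T1Q; apply/forall_inP => T2 T2Q.
  by apply/implyP; exact: Q_adj.
Qed.

Lemma KG_clique_card_le N (Q : {set {set {set 'I_N}}}) :
  4 <= N -> is_KG_clique Q -> #|Q| <= N %/ 2.
Proof.
move=> N_ge4 /KG_cliqueP[Q_tri Q_adj].
have Q_triv : trivIset Q.
  by apply/trivIsetP => A B AQ BQ AB; have /and3P[] := Q_adj A B AQ BQ AB.
have card_cover : #|cover Q| = #|Q| * (N - 3).
  rewrite (eqP (etrans (leq_card_cover Q).2 Q_triv)) -sum_nat_const.
  by apply: eq_bigr => T /Q_tri /and3P[_ _ /eqP].
have cover_diag : {in cover Q, forall d, is_diag d}.
  by move=> d /bigcupP[T /Q_tri /and3P[/forall_inP T_diag _ _] /T_diag].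
have := card_diags_le (ltnW N_ge4) cover_diag; rewrite card_cover mulnA.
by rewrite leq_pmul2r; lia.
Qed.

Lemma KG_clique_card_le_colors N k (Q : {set {set {set 'I_N}}})
    (c : {set {set 'I_N}} -> 'I_k) :
  is_KG_clique Q -> KG_proper_coloring c -> #|Q| <= k.
Proof.
move=> /KG_cliqueP[_ Q_adj] c_proper.
have c_inj : {in Q &, injective c}.
  by move=> T1 T2 T1Q T2Q; apply: contra_eq => /(Q_adj T1 T2 T1Q T2Q) /c_proper.
rewrite -(card_in_imset c_inj).
by apply: leq_trans (max_card _) _; rewrite card_ord.
Qed.

Definition zigzag_lo (N s l : nat) :=
  if l %/ 2 <= s then s - l %/ 2 else s + N - l %/ 2.
Definition zigzag_hi (s l : nat) := s + (l - l %/ 2).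

Lemma zigzag_endpointsE N s l :
  zigzag_hi s l = s + (l - l %/ 2) /\
  (l %/ 2 <= s /\ zigzag_lo N s l = s - l %/ 2 \/
   s < l %/ 2 /\ zigzag_lo N s l = s + N - l %/ 2).
Proof. by rewrite /zigzag_lo; split=> //; case: leqP; [left|right]. Qed.

(* Index [j] stands for the diagonal of length [l = j + 2] (the number of polygon
   edges it spans on the side containing [s]), so that [2 <= l <= n - 2]. *)
Definition zigzag_diag n s (j : 'I_(n.+1 - 3)) : {set 'I_n.+1} :=
  [set inord (zigzag_lo n.+1 s (j + 2)); inord (zigzag_hi s (j + 2))].
Arguments zigzag_diag : clear implicits.

Definition zigzag n s : {set {set 'I_n.+1}} :=
  [set zigzag_diag n s j | j : 'I_(n.+1 - 3)].

Section Zigzag.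

Variables n s : nat.
Hypotheses (n_ge3 : 3 <= n) (s_lt : s < n.+1 %/ 2).

Lemma zigzag_endpoints_lt (j : 'I_(n.+1 - 3)) :
  zigzag_lo n.+1 s (j + 2) < n.+1 /\ zigzag_hi s (j + 2) < n.+1.
Proof. have := ltn_ord j; have := zigzag_endpointsE n.+1 s (j + 2); lia. Qed.

Lemma zigzag_diag_sum (j : 'I_(n.+1 - 3)) (a b : 'I_n.+1) :
  zigzag_diag n s j = [set a; b] ->
  a + b = zigzag_lo n.+1 s (j + 2) + zigzag_hi s (j + 2).
Proof.
have [lo_lt hi_lt] := zigzag_endpoints_lt j.
by move/eq_set2_sum; rewrite !inordK.
Qed.

Lemma zigzag_is_diag d : d \in zigzag n s -> is_diag d.
Proof.
move=> /imsetP[j _ ->]; have [lo_lt hi_lt] := zigzag_endpoints_lt j.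
apply/existsP; exists (inord (zigzag_lo n.+1 s (j + 2))).
apply/existsP; exists (inord (zigzag_hi s (j + 2))).
rewrite eqxx /cyc_adj -!val_eqE /= !inordK //.
have := ltn_ord j; have := zigzag_endpointsE n.+1 s (j + 2).
have := modnS_cases lo_lt; have := modnS_cases hi_lt; lia.
Qed.

Lemma zigzag_noncrossing d e : d \in zigzag n s -> e \in zigzag n s ->
  ~~ crossing d e.
Proof.
move=> /imsetP[j1 _ ->] /imsetP[j2 _ ->].
apply/existsP => -[a /existsP[b /existsP[c /existsP[f
   /and3P[/eqP/zigzag_diag_sum ab_sum /eqP/zigzag_diag_sum cf_sum cross]]]]].
have := ltn_ord j1; have := ltn_ord j2; have := ltn_ord f.
have := zigzag_endpointsE n.+1 s (j1 + 2); have := zigzag_endpointsE n.+1 s (j2 + 2).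
move: cross => /andP[/andP[ac cb] bf]; lia.
Qed.

Lemma zigzag_diag_inj : injective (zigzag_diag n s).
Proof.
move=> j1 j2 E; apply: val_inj => /=.
have [lo1 hi1] := zigzag_endpoints_lt j1; have [lo2 hi2] := zigzag_endpoints_lt j2.
have := zigzag_endpointsE n.+1 s (j1 + 2); have := zigzag_endpointsE n.+1 s (j2 + 2).
have := ltn_ord j1; have := ltn_ord j2.
by case/eq_set2: E => -[/(congr1 val) + /(congr1 val)]; rewrite /= !inordK //; lia.
Qed.

Lemma card_zigzag : #|zigzag n s| = n.+1 - 3.
Proof. by rewrite card_imset ?card_ord //; exact: zigzag_diag_inj. Qed.

Lemma zigzag_triangulation : is_triangulation (zigzag n s).
Proof.
apply/and3P; split; last by rewrite card_zigzag.
  by apply/forall_inP => d; exact: zigzag_is_diag.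
apply/forall_inP => d dZ; apply/forall_inP => e eZ.
exact: zigzag_noncrossing.
Qed.

End Zigzag.

Lemma disjoint_zigzag n s1 s2 : 3 <= n -> s1 < n.+1 %/ 2 -> s2 < n.+1 %/ 2 ->
  s1 != s2 -> [disjoint zigzag n s1 & zigzag n s2].
Proof.
move=> n_ge3 s1_lt s2_lt; apply: contraR => /pred0Pn[d /andP[/= /imsetP[j1 _ ->]]].
move=> /imsetP[j2 _ /esym/zigzag_diag_sum E].
have [lo hi] := zigzag_endpoints_lt n_ge3 s1_lt j1.
move: E => /(_ n_ge3 s2_lt); rewrite !inordK //.
have := ltn_ord j1; have := ltn_ord j2.
have := zigzag_endpointsE n.+1 s1 (j1 + 2); have := zigzag_endpointsE n.+1 s2 (j2 + 2).
move=> *; apply/eqP; lia.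
Qed.

Definition zigzag_clique n : {set {set {set 'I_n.+1}}} :=
  [set zigzag n s | s : 'I_(n.+1 %/ 2)].

Lemma zigzag_clique_is_KG_clique n : 3 <= n -> is_KG_clique (zigzag_clique n).
Proof.
move=> n_ge3; apply/KG_cliqueP; split.
  by move=> _ /imsetP[s _ ->]; exact: zigzag_triangulation.
move=> _ _ /imsetP[s1 _ ->] /imsetP[s2 _ ->] Z12.
rewrite /KG_adj !zigzag_triangulation //.
by apply: disjoint_zigzag => //; apply: contraNneq Z12 => /val_inj ->.
Qed.

Lemma card_zigzag_clique n : 3 <= n -> #|zigzag_clique n| = n.+1 %/ 2.
Proof.
move=> n_ge3; rewrite card_imset ?card_ord // => s1 s2 Z12.
apply/eqP; apply: contraT => s12.
have := disjoint_zigzag n_ge3 (ltn_ord s1) (ltn_ord s2) s12.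
by rewrite Z12 -setI_eq0 setIid -cards_eq0 card_zigzag //; lia.
Qed.

Theorem mainTheorem15 (n : nat) : 4 <= n ->
  KG_clique_number n = n./2 /\
  (forall (k : nat) (c : {set {set 'I_n}} -> 'I_k),
      KG_proper_coloring c -> n./2 <= k).
Proof.
case: n => [//|n] n_ge4; have n_ge3 : 3 <= n by lia.
rewrite -divn2 -(card_zigzag_clique n_ge3); split.
  apply/eqP; rewrite eqn_leq; apply/andP; split.
    apply/bigmax_leqP => Q; rewrite card_zigzag_clique //.
    exact: KG_clique_card_le.
  exact: leq_bigmax_cond (zigzag_clique_is_KG_clique n_ge3).
move=> k c; exact: KG_clique_card_le_colors (zigzag_clique_is_KG_clique n_ge3).
Qed.
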